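(* Let $C=\{x\in\ell_2:\|x\|_1\le1\}$, considered as a subset of $\ell_2$ with the $\ell_2$-norm topology, where $\|x\|_1=\sum_i|x_i|$. Then $\operatorname{icr} C=\operatorname{fri} C=\{x\in\ell_2:\|x\|_1<1\}$.
   Context: For a convex set $C$, a convex subset $F\subseteq C$ is a face of $C$ if for every $x\in F$ and all $y,z\in C$ with $x\in(y,z)=\{(1-t)y+tz:t\in(0,1)\}$ we have $y,z\in F$; $F_{\min}(x,C)$ is the intersection of all faces of $C$ containing $x\in C$. $\operatorname{icr} C=\{x\in C:\forall y\in C\ \exists z\in C,\ x\in(y,z)\}$; $\operatorname{fri} C=\{x\in C: C\subseteq\overline{F_{\min}(x,C)}\}$. *)

From HB Require Import structures.
From mathcomp Require Import all_boot all_order all_algebra.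
From mathcomp Require Import all_classical all_reals all_analysis.
Set Implicit Arguments. Unset Strict Implicit. Unset Printing Implicit Defensive.
Import Order.TTheory GRing.Theory Num.Theory.
Local Open Scope classical_set_scope.
Local Open Scope ring_scope.

Section Defs.
Variable R : realType.
Local Notation seqR := (nat -> R).

Definition l1norm (x : seqR) : \bar R := (\sum_(0 <= i <oo) (`|x i|)%:E)%E.
Definition l2sq (x : seqR) : \bar R := (\sum_(0 <= i <oo) ((x i) ^+ 2)%:E)%E.

Definition l2 : set seqR := [set x | (l2sq x < +oo)%E].

Definition l2closure (F : set seqR) : set seqR :=
  [set z | l2 z /\ forall e : R, 0 < e ->
     exists2 y, F y & (l2sq (fun i => (z i - y i)%R) < (e ^+ 2)%:E)%E].

Definition in_open_seg (x y z : seqR) : Prop :=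
  exists t : R, 0 < t /\ t < 1 /\ x = (fun i => (1 - t) * y i + t * z i).

Definition convex_set (F : set seqR) : Prop :=
  forall y z, F y -> F z -> forall t : R, 0 <= t -> t <= 1 ->
    F (fun i => (1 - t) * y i + t * z i).

Definition is_face (C F : set seqR) : Prop :=
  F `<=` C /\ convex_set F /\
  forall x y z, F x -> C y -> C z -> in_open_seg x y z -> F y /\ F z.

Definition Fmin (x : seqR) (C : set seqR) : set seqR :=
  [set u | forall F, is_face C F -> F x -> F u].

Definition icr (C : set seqR) : set seqR :=
  [set x | C x /\ forall y, C y -> exists2 z, C z & in_open_seg x y z].

Definition fri (C : set seqR) : set seqR :=
  [set x | C x /\ C `<=` l2closure (Fmin x C)].

End Defs.

From Pilot Require Import Defs.
From HB Require Import structures.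
From mathcomp Require Import all_boot all_order all_algebra.
From mathcomp Require Import all_classical all_reals all_analysis.
From mathcomp Require Import ring lra.
Set Implicit Arguments. Unset Strict Implicit. Unset Printing Implicit Defensive.
Import Order.TTheory GRing.Theory Num.Theory.
Local Open Scope classical_set_scope.
Local Open Scope ring_scope.

(* If ||x||_1 < 1, then from any y in C one can step past x to z = x + e (x - y)
   without leaving C, so x is in icr C; and icr C is contained in fri C for every C,
   since a face through a point of icr C contains all of C.  Conversely, if
   ||x||_1 = 1, the points y of the unit sphere whose coordinates carry the signs
   of x (y_i sg x_i = |y_i|) form a face of C through x.  Every such y has
   x_j y_j >= 0, so -x, which lies in C, stays at l_2-distance at least |x_j| from
   that face, and x is not in fri C. *)

Section NonnegSeries.
Variable R : realType.
Implicit Types f g : nat -> R.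

Lemma nneseries_term_le (u : nat -> \bar R) n : (forall k, 0 <= u k)%E ->
  (u n <= \sum_(0 <= k <oo) u k)%E.
Proof.
move=> u0; rewrite (@nneseriesD1 R u n xpredT) //.
by rewrite leeDl //; apply: nneseries_ge0 => k _ _.
Qed.

Lemma nneseries_comb (a b : R) f g : 0 <= a -> 0 <= b ->
  (forall i, 0 <= f i) -> (forall i, 0 <= g i) ->
  (\sum_(0 <= i <oo) (a * f i + b * g i)%:E =
   a%:E * \sum_(0 <= i <oo) (f i)%:E + b%:E * \sum_(0 <= i <oo) (g i)%:E)%E.
Proof.
move=> a0 b0 f0 g0; rewrite -!nneseriesZl; [|by move=> i _; rewrite lee_fin..].
rewrite -nneseriesD; [|by move=> i _ _; rewrite lee_fin mulr_ge0..].
by apply: eq_eseriesr => i _; rewrite EFinD !EFinM.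
Qed.

Lemma nneseries_le_eq f g (r : R) : (forall i, 0 <= f i) -> (forall i, f i <= g i) ->
  (\sum_(0 <= i <oo) (f i)%:E = r%:E)%E -> (\sum_(0 <= i <oo) (g i)%:E = r%:E)%E ->
  forall i, f i = g i.
Proof.
move=> f0 fg sf sg i; have gf0 k : 0 <= g k - f k by rewrite subr_ge0.
have sgf : (\sum_(0 <= k <oo) (g k - f k)%:E = 0)%E.
  move: sg; have -> : (\sum_(0 <= k <oo) (g k)%:E =
      \sum_(0 <= k <oo) (f k)%:E + \sum_(0 <= k <oo) (g k - f k)%:E)%E.
    rewrite -nneseriesD; [|by move=> k _ _; rewrite lee_fin..].
    by apply: eq_eseriesr => k _; rewrite -EFinD addrC subrK.
  rewrite sf; case: (\sum_(0 <= k <oo) _)%E => [s||] //= [].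
  by move=> /eqP; rewrite addrC -subr_eq0 addrK => /eqP ->.
apply/le_anti; rewrite fg /= -subr_le0 -lee_fin.
have := @nneseries_term_le (fun k => (g k - f k)%:E) i; rewrite sgf; apply => k.
by rewrite lee_fin.
Qed.

End NonnegSeries.

Section L1Norm.
Variable R : realType.
Implicit Types x y z : nat -> R.

Lemma l1norm_ge0 x : (0 <= l1norm x)%E.
Proof. by apply: nneseries_ge0 => k _ _; rewrite lee_fin. Qed.

Lemma l1norm0 : l1norm (fun _ : nat => 0 : R) = 0%E.
Proof. by apply: eseries0 => i _ _; rewrite normr0. Qed.

Lemma l1normN x : l1norm (fun i => - x i) = l1norm x.
Proof. by apply: eq_eseriesr => i _; rewrite normrN. Qed.

Lemma l1norm_comb_le (a b : R) y z :
  (l1norm (fun i => (a * y i + b * z i)%R) <= `|a|%:E * l1norm y + `|b|%:E * l1norm z)%E.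
Proof.
rewrite /l1norm -nneseries_comb //; apply: lee_nneseries => [i _ _|n _].
  by rewrite lee_fin.
by rewrite lee_fin -!normrM ler_normD.
Qed.

Lemma l1norm_le1_fin x : (l1norm x <= 1%:E)%E ->
  exists2 r : R, l1norm x = r%:E & 0 <= r <= 1.
Proof.
move: (l1norm_ge0 x); case: (l1norm x) => [r|//|//] r0 r1.
by exists r => //; rewrite -!lee_fin r0 r1.
Qed.

Lemma l1norm_le1_l2 x : (l1norm x <= 1%:E)%E -> l2 x.
Proof.
move=> x1; have xn1 n : `|x n| <= 1.
  rewrite -lee_fin; apply: le_trans x1.
  by apply: (@nneseries_term_le _ (fun k => `|x k|%:E)) => k; rewrite lee_fin.
apply: le_lt_trans (ltry 1); apply: le_trans x1.
apply: lee_nneseries => [i _ _|n _]; first by rewrite lee_fin sqr_ge0.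
by rewrite lee_fin -real_normK ?num_real // ler_piMr.
Qed.

End L1Norm.

Section IcrFri.
Variable R : realType.
Implicit Types (C F : set (nat -> R)) (x u : nat -> R).

Lemma sub_l2closure F u : l2 u -> F u -> l2closure F u.
Proof.
move=> l2u Fu; split => // e e0; exists u => //.
rewrite /l2sq; under eq_eseriesr do rewrite subrr expr0n /=.
by rewrite eseries0 // lte_fin exprn_gt0.
Qed.

Lemma icr_sub_Fmin C x : icr C x -> C `<=` Fmin x C.
Proof.
move=> [_ icrx] u Cu F [_ [_ Fextreme]] Fx; have [z Cz xuz] := icrx u Cu.
by case: (Fextreme x u z Fx Cu Cz xuz).
Qed.

Lemma icr_sub_fri C : C `<=` @l2 R -> icr C `<=` fri C.
Proof.
move=> Cl2 x icrx; split; first by case: icrx.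
by move=> u Cu; apply: sub_l2closure (Cl2 _ Cu) (icr_sub_Fmin icrx Cu).
Qed.

End IcrFri.

Section L1Ball.
Variable R : realType.
Implicit Types x y z u : nat -> R.

Definition l1ball : set (nat -> R) := [set x | l2 x /\ (l1norm x <= 1%:E)%E].

Lemma l1norm_le1_ball x : (l1norm x <= 1%:E)%E -> l1ball x.
Proof. by move=> x1; split => //; apply: l1norm_le1_l2. Qed.

Lemma l1norm_lt1_icr x : (l1norm x < 1%:E)%E -> icr l1ball x.
Proof.
move=> x1; have [a xa /andP[a0 _]] := l1norm_le1_fin (ltW x1).
have a1 : a < 1 by rewrite -lte_fin -xa.
split; first exact/l1norm_le1_ball/ltW.
move=> y [_ y1]; have [b yb /andP[b0 b1]] := l1norm_le1_fin y1.
(* ||z||_1 <= (1 + e) a + e <= 1 for this choice of e. *)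
pose e := (1 - a) / 4; have e0 : 0 < e by rewrite /e; lra.
exists (fun i => (1 + e) * x i + (- e) * y i).
  apply/l1norm_le1_ball/(le_trans (l1norm_comb_le _ _ _ _)).
  rewrite xa yb normrN !ger0_norm; [|lra..].
  by rewrite -!EFinM -EFinD lee_fin /e; nra.
exists (1 + e)^-1; split; first by rewrite invr_gt0; lra.
split; first by rewrite invf_lt1; lra.
have e1 : 1 + e != 0 by rewrite gt_eqF //; lra.
by apply/funext => i; move: e1; clearbody e => e1; field.
Qed.

End L1Ball.
Arguments l1ball {R}.

Section SignFace.
Variable R : realType.
Variable s : nat -> R.
Hypothesis s_le1 : forall i, `|s i| <= 1.
Implicit Types y z u : nat -> R.

Definition sign_face : set (nat -> R) :=
  [set y | l1ball y /\ l1norm y = 1%:E /\ forall i, y i * s i = `|y i|].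

Lemma mul_sign_le (v : R) i : v * s i <= `|v|.
Proof. by apply: le_trans (ler_norm _) _; rewrite normrM ler_piMr. Qed.

(* [convex_set] alone would refer to the homonymous notion of mathcomp-analysis. *)
Lemma sign_face_convex : Defs.convex_set sign_face.
Proof.
move=> y z [_ [y1 ys]] [_ [z1 zs]] t t0 t1; have t1' : 0 <= 1 - t by lra.
have normE i : `|(1 - t) * y i + t * z i| = (1 - t) * `|y i| + t * `|z i|.
  apply/le_anti/andP; split.
    by apply: le_trans (ler_normD _ _) _; rewrite !normrM (ger0_norm t1') (ger0_norm t0).
  rewrite [X in X <= _](_ : _ = ((1 - t) * y i + t * z i) * s i) ?mul_sign_le //.
  by rewrite -ys -zs; ring.
have v1 : l1norm (fun i => (1 - t) * y i + t * z i) = 1%:E.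
  rewrite /l1norm; under eq_eseriesr do rewrite normE.
  rewrite nneseries_comb // -/(l1norm y) -/(l1norm z) y1 z1 -!EFinM -EFinD.
  by congr EFin; ring.
split; first by apply: l1norm_le1_ball; rewrite v1.
by split => // i; rewrite normE -ys -zs; ring.
Qed.

Lemma sign_face_extreme u y z : sign_face u -> l1ball y -> l1ball z ->
  in_open_seg u y z -> sign_face y /\ sign_face z.
Proof.
move=> [_ [u1 us]] By Bz [t [t0 [t1 uE]]]; have [[_ y1] [_ z1]] := (By, Bz).
have [t0' t1'] : 0 <= t /\ 0 <= 1 - t by split; lra.
have [b yb /andP[b0 b1]] := l1norm_le1_fin y1.
have [c zc /andP[c0 c1]] := l1norm_le1_fin z1.
pose w i := (1 - t) * `|y i| + t * `|z i|.
have uw i : `|u i| <= w i.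
  rewrite -us uE mulrDl -!mulrA.
  by apply: lerD; apply: ler_wpM2l; rewrite ?mul_sign_le.
have sw : (\sum_(0 <= i <oo) (w i)%:E = ((1 - t) * b + t * c)%:E)%E.
  by rewrite nneseries_comb // -/(l1norm y) -/(l1norm z) yb zc -!EFinM -EFinD.
have bc1 : (1 - t) * b + t * c = 1.
  apply/le_anti/andP; split; first nra.
  rewrite -lee_fin -sw -u1; apply: lee_nneseries => [i _ _|i _].
    by rewrite lee_fin.
  by rewrite lee_fin uw.
have [yb1 zc1] : b = 1 /\ c = 1 by split; nra.
rewrite bc1 in sw; have uwE := nneseries_le_eq (fun i => normr_ge0 (u i)) uw u1 sw.
have aligned i : y i * s i = `|y i| /\ z i * s i = `|z i|.
  move: (uwE i) (mul_sign_le (y i) i) (mul_sign_le (z i) i).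
  by rewrite /w -us uE => ? ? ?; split; nra.
by split; do 2?split => //; rewrite ?yb ?yb1 ?zc ?zc1 // => i; case: (aligned i).
Qed.

Lemma sign_face_is_face : is_face l1ball sign_face.
Proof.
split; first by move=> y [].
by split; [exact: sign_face_convex | exact: sign_face_extreme].
Qed.

End SignFace.

Section UnitSphere.
Variable R : realType.
Implicit Types x y : nat -> R.

Lemma sg_le1 x i : `|Num.sg (x i)| <= 1.
Proof. by rewrite normr_sg; case: (_ != 0). Qed.

Lemma sign_face_sg x : l1ball x -> l1norm x = 1%:E ->
  sign_face (fun i => Num.sg (x i)) x.
Proof. by move=> Bx x1; do 2!split => //; move=> i; rewrite mulrC -normrEsg. Qed.

Lemma sign_face_sg_far x y j : sign_face (fun i => Num.sg (x i)) y ->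
  ((x j ^+ 2)%:E <= l2sq (fun i => (- x i - y i)%R))%E.
Proof.
move=> [_ [_ ys]]; have xy : 0 <= x j * y j.
  have -> : x j * y j = `|x j| * (y j * Num.sg (x j)).
    by rewrite {1}(numEsg (x j)); ring.
  by rewrite ys mulr_ge0.
apply: le_trans (@nneseries_term_le _ (fun i => ((- x i - y i) ^+ 2)%:E) j _).
  by rewrite lee_fin; nra.
by move=> i; rewrite lee_fin sqr_ge0.
Qed.

Lemma fri_l1norm_lt1 x : fri l1ball x -> (l1norm x < 1%:E)%E.
Proof.
move=> [Bx Bcl]; rewrite lt_neqAle Bx.2 andbT; apply/eqP => x1.
have [j xj] : exists j, x j != 0.
  apply: contrapT => /forallNP x0; move: x1.
  have -> : x = fun _ => 0 by apply/funext => i; apply/eqP/negPn/negP/x0.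
  by rewrite l1norm0 => -[] /eqP; rewrite eq_sym oner_eq0.
have Bnx : l1ball (fun i => - x i) by apply: l1norm_le1_ball; rewrite l1normN x1.
have [_ /(_ `|x j|)] := Bcl _ Bnx; case=> [|y Fy]; first by rewrite normr_gt0.
have := sign_face_sg_far j (Fy _ (sign_face_is_face (sg_le1 x)) (sign_face_sg Bx x1)).
by rewrite -real_normK ?num_real // => /le_lt_trans/[apply]; rewrite ltxx.
Qed.

End UnitSphere.

Theorem mainTheorem19 (R : realType) :
  let C := [set x : nat -> R | l2 x /\ (l1norm x <= 1%:E)%E] in
  icr C = fri C /\
  fri C = [set x : nat -> R | l2 x /\ (l1norm x < 1%:E)%E].
Proof.
move=> C; have icr_fri : icr C `<=` fri C by apply: icr_sub_fri => x [].
split; apply/seteqP; split => // x.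
- by move/fri_l1norm_lt1/l1norm_lt1_icr.
- by move=> frix; split; [case: frix => -[] | exact: fri_l1norm_lt1].
- by move=> [_ /l1norm_lt1_icr/icr_fri].
Qed.
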